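(* Let $N \ge \Delta \ge 1$ be integers. Then: (1) $g(N,1)=0$. (2) If $\Delta \geq 2$ and $N-1 \equiv k \pmod{\Delta - 1}$ with $0 \leq k \leq \Delta -2$, then $g(N,\Delta) = \frac{(N-k-1)\Delta}{2} + \binom{k+1}{2} \leq \frac{(N-1)\Delta}{2}$. (3) If $\Delta \geq 2$, then $g(N+1,\Delta) \geq g(N,\Delta)+1$. (4) If $N > \Delta$, then $g(N,\Delta+1) \geq g(N,\Delta)+1$.
   Context: All graphs are finite and simple; $L(F)$ is the line graph of $F$, $e(\cdot)$ the number of edges, $\Delta(\cdot)$ the maximum degree, $\delta(\cdot)$ the minimum degree. For integers $N \ge \Delta \ge 1$, $g(N,\Delta) = \max\{ e(L(F)) : F \text{ acyclic}, e(F)=N, \Delta(F)=\Delta, \delta(F)\geq 1\}$. *)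

From Stdlib Require Import ClassicalEpsilon.
From mathcomp Require Import all_boot all_order all_algebra.
Set Implicit Arguments. Unset Strict Implicit. Unset Printing Implicit Defensive.

Definition simple_graph (T : finType) (E : {set {set T}}) : bool :=
  [forall e in E, #|e| == 2].

Definition adj (T : finType) (E : {set {set T}}) : rel T :=
  fun x y => (x != y) && ([set x; y] \in E).

Definition acyclic (T : finType) (E : {set {set T}}) : Prop :=
  ~ exists s : seq T, [/\ 3 <= size s, uniq s & cycle (adj E) s].

Definition deg (T : finType) (E : {set {set T}}) (v : T) : nat :=
  #|[set e in E | v \in e]|.

Definition maxdeg (T : finType) (E : {set {set T}}) : nat :=
  \max_(v : T) deg E v.

Definition mindeg_ge1 (T : finType) (E : {set {set T}}) : Prop :=
  forall v : T, 1 <= deg E v.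

Definition line_edges (T : finType) (E : {set {set T}}) : {set {set {set T}}} :=
  [set P : {set {set T}} | [&& P \subset E, #|P| == 2 &
     [exists e in P, exists f in P, (e != f) && (e :&: f != set0)]]].

Definition admissible (N D : nat) (T : finType) (E : {set {set T}}) : Prop :=
  [/\ simple_graph E, acyclic E, #|E| = N, maxdeg E = D & mindeg_ge1 E].

Definition is_g (N D m : nat) : Prop :=
  (exists (T : finType) (E : {set {set T}}),
      admissible N D E /\ #|line_edges E| = m) /\
  (forall (T : finType) (E : {set {set T}}),
      admissible N D E -> #|line_edges E| <= m).

(* g(N, D) := the maximum (chosen by classical description; it exists in
   every case considered by the theorem). *)
Definition g (N D : nat) : nat := epsilon (inhabits 0%N) (is_g N D).

From Stdlib Require Import ClassicalEpsilon.
From mathcomp Require Import all_boot all_order all_algebra zify lra.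
Import GRing.Theory Num.Theory.
Set Implicit Arguments. Unset Strict Implicit. Unset Printing Implicit Defensive.

(* In a forest F with N edges and no isolated vertex, e(L(F)) = sum_v 'C(d_v, 2), and since F
   has at least N + 1 vertices the excess degrees x_v = d_v - 1 <= Delta - 1 sum to at most
   N - 1.  As x |-> 'C(x + 1, 2) is convex, sum_v 'C(x_v + 1, 2) is largest when the excess is
   packed greedily into parts of size Delta - 1, and a breadth-first tree whose vertices are
   filled to degree Delta realises this packing.  Hence g(N, Delta) = pack (N - 1) (Delta - 1)
   for Delta >= 2, a perfect matching gives g(N, 1) = 0, and (2)-(4) are arithmetic properties
   of pack. *)

Lemma bin2S_double n : 'C(n.+1, 2).*2 = n * n.+1.
Proof. by elim: n => // n IH; rewrite binS bin1 doubleD IH; lia. Qed.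

(* The maximum of sum_i 'C(x_i.+1, 2) over parts 0 <= x_i <= M with sum_i x_i = S (see
   leq_sum_pack), attained by S %/ M full parts and one part S %% M. *)
Definition pack (S M : nat) : nat := S %/ M * 'C(M.+1, 2) + 'C((S %% M).+1, 2).

Lemma pack_eval q k M : k < M -> pack (q * M + k) M = q * 'C(M.+1, 2) + 'C(k.+1, 2).
Proof.
move=> ltkM; have M_gt0 : 0 < M by lia.
by rewrite /pack divnMDl // modnMDl divn_small // modn_small // addn0.
Qed.

Lemma pack_small k M : k < M -> pack k M = 'C(k.+1, 2).
Proof. by move=> /(pack_eval 0); rewrite add0n. Qed.

Lemma pack_eval_double q k M : k < M ->
  (pack (q * M + k) M).*2 = q * (M * M.+1) + k * k.+1.
Proof. by move=> ltkM; rewrite pack_eval // doubleD doubleMr !bin2S_double. Qed.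

Lemma pack_addM a M : 0 < M -> pack (a + M) M = pack a M + 'C(M.+1, 2).
Proof.
move=> M_gt0; have -> : a + M = (a %/ M).+1 * M + a %% M.
  by rewrite mulSn {1}(divn_eq a M); lia.
by rewrite pack_eval ?ltn_mod // /pack mulSn; lia.
Qed.

Lemma leq_pack_add a x M : 0 < M -> x <= M -> pack a M + 'C(x.+1, 2) <= pack (a + x) M.
Proof.
move=> M_gt0 le_xM; rewrite -leq_double doubleD bin2S_double {1 2}(divn_eq a M).
move: (a %/ M) (a %% M) (ltn_mod a M) => q k; rewrite M_gt0 => ltkM.
rewrite pack_eval_double //; have [ltkxM | lekxM] := ltnP (k + x) M.
  by rewrite -[q * M + k + x]addnA pack_eval_double //; nia.
have -> : q * M + k + x = q.+1 * M + (k + x - M) by rewrite mulSn; lia.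
rewrite pack_eval_double; last by lia.
(* Convexity: k(k+1) + x(x+1) <= M(M+1) + j(j+1) when k + x = M + j and k, x <= M. *)
move: (k + x - M) (subnKC lekxM) => j def_j; nia.
Qed.

Lemma pack_succ a M : 0 < M -> pack a.+1 M = pack a M + (a %% M).+1.
Proof.
move=> M_gt0; rewrite {1 2 3}(divn_eq a M).
move: (a %/ M) (a %% M) (ltn_mod a M) => q k; rewrite M_gt0 => ltkM.
rewrite modnMDl modn_small // pack_eval //.
have [ltk1M | lek1M] := ltnP k.+1 M.
  by rewrite -addnS pack_eval // (binS k.+1 1) bin1 addnA.
have eqk1M : k.+1 = M by lia.
have -> : (q * M + k).+1 = q.+1 * M + 0 by rewrite mulSn; lia.
by rewrite pack_eval // -eqk1M (binS k.+1 1) bin1 (@bin_small 1 2) // mulSn; lia.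
Qed.

Lemma leq_sum_pack (I : Type) (r : seq I) (x : I -> nat) M :
  0 < M -> (forall i, x i <= M) ->
  \sum_(i <- r) 'C((x i).+1, 2) <= pack (\sum_(i <- r) x i) M.
Proof.
move=> M_gt0 le_xM; apply: (big_rec2 (fun a b => a <= pack b M)) => // i a b _ le_ab.
rewrite addnC [_ + b]addnC; apply: leq_trans (leq_pack_add _ M_gt0 (le_xM i)).
by rewrite leq_add2r.
Qed.

Lemma leq_pack a b M : 0 < M -> a <= b -> pack a M <= pack b M.
Proof.
move=> M_gt0 /subnK <-; elim: (b - a) => // n IH.
by rewrite addSn pack_succ //; apply: leq_trans IH (leq_addr _ _).
Qed.

Lemma leq_pack_capS a M : 0 < M -> pack a M <= pack a M.+1.
Proof.
move=> M_gt0; rewrite (divn_eq a M).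
move: (a %/ M) (a %% M) (ltn_mod a M) => q k; rewrite M_gt0 => ltkM; elim: q => [|q IH].
  by rewrite !add0n !pack_small // ltnW.
have -> : q.+1 * M + k = q * M + k + M by rewrite mulSn; lia.
rewrite pack_addM //; apply: leq_trans (leq_pack_add _ (ltn0Sn M) (leqnSn M)).
by rewrite leq_add2r.
Qed.

Lemma ltn_pack_capS S M : 0 < M -> M < S -> pack S M < pack S M.+1.
Proof.
move=> M_gt0 ltMS; have -> : S = (S - M.+1) + M.+1 by lia.
set r := S - M.+1.
(* Peel a full part off both sides, as r.+1 + M on the left and r + M.+1 on the right. *)
rewrite pack_addM // -[r + M.+1]addSnnS pack_addM // pack_succ //.
have := leq_pack_capS r M_gt0; have := ltn_mod r M; rewrite M_gt0 (binS M.+1 1) bin1; lia.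
Qed.

Lemma greedy_sum_pack n S M : 0 < M -> S < n * M ->
  \sum_(v < n) 'C((minn M (S - v * M)).+1, 2) = pack S M.
Proof.
move=> M_gt0; elim: n S => [|n IH] S //; rewrite mulSn big_ord_recl /= mul0n subn0 => ltS.
under eq_bigr do rewrite /bump /= add1n mulSn subnDA.
have [ltSM | leMS] := ltnP S M.
  rewrite big1 => [|v _]; first by rewrite addn0 pack_small.
  by rewrite (eqP (ltnW ltSM)) sub0n.
rewrite IH; last by lia.
by rewrite addnC -pack_addM // subnK.
Qed.

Section SimpleGraph.
Variables (T : finType) (E : {set {set T}}).
Hypothesis simpleE : simple_graph E.

Definition star (v : T) : {set {set T}} := [set e in E | v \in e].

Lemma adj_sym x y : adj E x y = adj E y x.
Proof. by rewrite /adj eq_sym setUC. Qed.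

Lemma leq_deg_maxdeg v : deg E v <= maxdeg E.
Proof. exact: leq_bigmax. Qed.

Lemma card_edge e : e \in E -> #|e| = 2.
Proof. by move=> eE; apply/eqP; move/forall_inP: simpleE; apply. Qed.

Lemma edge_set2 e u : e \in E -> u \in e -> exists2 z, z != u & e = [set u; z].
Proof.
move=> eE ue; have /cards2P [a [b [neab def_e]]] : #|e| == 2 by rewrite card_edge.
move: ue; rewrite def_e !inE => /orP [] /eqP ->; first by exists b; rewrite // eq_sym.
by exists a; rewrite // setUC.
Qed.

Lemma sum_deg : \sum_v deg E v = 2 * #|E|.
Proof.
have deg_sum v : deg E v = \sum_(e in E) (v \in e).
  rewrite /deg -sum1_card (eq_bigl (fun e => (e \in E) && (v \in e))) => [|e].
    by rewrite big_mkcondr; apply: eq_bigr => e _; case: (v \in e).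
  by rewrite inE.
under eq_bigr do rewrite deg_sum.
rewrite exchange_big -sum1_card big_distrr; apply: eq_bigr => e eE.
rewrite /= muln1 -(card_edge eE) -sum1_card [RHS]big_mkcond.
by apply: eq_bigr => v _; case: (v \in e).
Qed.

Lemma card_edgeI_le1 e f : e \in E -> f \in E -> e != f -> #|e :&: f| <= 1.
Proof.
move=> eE fE; apply: contraNT; rewrite -ltnNge => ef_gt1.
have eqI g : g \in E -> e :&: f \subset g -> e :&: f = g.
  by move=> gE sub; apply/eqP; rewrite eqEcard sub card_edge.
by rewrite -(eqI e) ?subsetIl // (eqI f) ?subsetIr.
Qed.

Lemma line_edges_pair P : P \in line_edges E ->
  exists e f, [/\ e \in E, f \in E, e != f, P = [set e; f] & #|e :&: f| = 1].
Proof.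
rewrite inE => /and3P [sPE /eqP P2 /exists_inP [e eP /exists_inP [f fP /andP [nef ef0]]]].
have [eE fE] := (subsetP sPE e eP, subsetP sPE f fP).
exists e, f; split => //.
  by apply/esym/eqP; rewrite eqEcard P2 cards2 nef andbT subUset !sub1set eP fP.
by apply/eqP; rewrite eqn_leq card_edgeI_le1 // card_gt0.
Qed.

Lemma line_edges_star v : [set P in line_edges E | P \subset star v] =
                          [set P : {set {set T}} | P \subset star v & #|P| == 2].
Proof.
apply/setP => P; rewrite !inE andbC; apply: andb_id2l => sPv.
apply/andP/idP => [[_ /andP [] //] | P2]; split.
  by apply/subsetP => e /(subsetP sPv); rewrite inE => /andP [].
rewrite P2; case/cards2P: P2 => e [f [nef def_P]].
have [ev fv] : v \in e /\ v \in f.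
  by move: sPv; rewrite def_P subUset !sub1set !inE => /andP [/andP [_ ->] /andP [_ ->]].
apply/exists_inP; exists e; rewrite ?def_P ?set21 //; apply/exists_inP; exists f.
  by rewrite set22.
by rewrite nef; apply/set0Pn; exists v; rewrite inE ev fv.
Qed.

(* Double counting: the line edge {e, f} is counted at the unique common vertex of e and f. *)
Lemma card_line_edges : #|line_edges E| = \sum_v 'C(deg E v, 2).
Proof.
have star_count v : 'C(deg E v, 2) = \sum_(P in line_edges E) (P \subset star v).
  rewrite /deg -/(star v) -cards_draws -line_edges_star -sum1_card.
  rewrite big_mkcond [RHS]big_mkcond; apply: eq_bigr => P _.
  by rewrite inE; case: (P \in line_edges E).
rewrite (eq_bigr _ (fun v _ => star_count v)) exchange_big -sum1_card.
apply: eq_bigr => P /line_edges_pair [e [f [eE fE _ -> ef1]]].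
rewrite -ef1 -sum1_card big_mkcond; apply: eq_bigr => v _.
by rewrite subUset !sub1set !inE eE fE.
Qed.

Definition upath (s : seq T) : bool := uniq s && sorted (adj E) s.

Lemma upath_extend u w t e : acyclic E -> upath [:: u, w & t] ->
  e \in E -> u \in e -> e != [set u; w] -> exists z, upath [:: z, u, w & t].
Proof.
move=> acyE /andP [uniq_s path_s] eE ue neuw; rewrite /= in path_s.
have [z nzu def_e] := edge_set2 eE ue.
have adj_zu : adj E z u by rewrite /adj nzu setUC -def_e.
have nzw : z != w by apply: contraNneq neuw => <-; rewrite def_e.
exists z; rewrite /upath cons_uniq uniq_s /= adj_zu path_s !andbT.
rewrite !inE (negbTE nzu) (negbTE nzw) /=.
apply/negP => z_t; case/splitPr: z_t uniq_s path_s => t1 t2 uniq_s path_s; apply: acyE.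
exists [:: u, w & rcons t1 z]; split; first by rewrite /= size_rcons.
  have : uniq ([:: u, w & rcons t1 z] ++ t2) by rewrite /= cat_rcons.
  by rewrite cat_uniq => /andP [].
rewrite /cycle rcons_path /= last_rcons adj_zu andbT.
by move: path_s; rewrite -cat_rcons cat_path => /and3P [-> -> _].
Qed.

(* The first vertex of a longest path is a leaf. *)
Lemma exists_leaf : acyclic E -> E != set0 ->
  exists v e, [/\ e \in E, v \in e & forall e', e' \in E -> v \in e' -> e' = e].
Proof.
move=> acyE /set0Pn [e0 e0E]; have /cards2P [x [y [nxy def_e0]]] : #|e0| == 2.
  by rewrite card_edge.
pose long n := [exists s : n.-tuple T, upath s && (2 <= n)].
have long2 : long 2.
  by apply/existsP; exists [tuple x; y]; rewrite /upath /= !inE nxy /adj nxy -def_e0 e0E.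
have long_bound n : long n -> n <= #|T|.
  case/existsP => s /andP [/andP [/card_uniqP card_s _] _].
  by rewrite -(size_tuple s) -card_s max_card.
case: (ex_maxnP (ex_intro long 2 long2) long_bound) => n.
case/existsP => s /andP [path_s n2] long_max.
move: (tval s) (size_tuple s) path_s => {}s size_s path_s.
case: s size_s path_s => [|u [|w t]] /= size_s path_s; subst n => //.
have [all_uw | /forall_inPn [e eE]] := boolP [forall e in E, (u \in e) ==> (e == [set u; w])].
  exists u, [set u; w]; split; first by case/and3P: path_s => _ /andP [_ ->].
    by rewrite !inE eqxx.
  by move=> e eE ue; apply/eqP; move/forall_inP: all_uw => /(_ e eE); rewrite ue.
rewrite negb_imply => /andP [ue neuw].
have [z path_z] := upath_extend acyE path_s eE ue neuw.
have /long_max : long (size t).+3.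
  by apply/existsP; exists (in_tuple [:: z, u, w & t]); rewrite path_z.
by rewrite ltnn.
Qed.
End SimpleGraph.

Lemma simple_graph_subset (T : finType) (E E' : {set {set T}}) :
  E' \subset E -> simple_graph E -> simple_graph E'.
Proof.
by move=> sE'E /forall_inP simpleE; apply/forall_inP => e /(subsetP sE'E)/simpleE.
Qed.

Lemma acyclic_subset (T : finType) (E E' : {set {set T}}) :
  E' \subset E -> acyclic E -> acyclic E'.
Proof.
move=> sE'E acyE [s [s3 uniq_s cyc_s]]; apply: acyE; exists s; split=> //.
by apply: sub_cycle cyc_s => x y; rewrite /adj => /andP [-> /(subsetP sE'E)].
Qed.

Lemma card_forest_lt_cover (T : finType) (E : {set {set T}}) :
  simple_graph E -> acyclic E -> E != set0 -> #|E| < #|cover E|.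
Proof.
have [n] := ubnP #|E|; elim: n E => // n IH E ltEn simpleE acyE nzE.
have [v [e [eE ve leaf_v]]] := exists_leaf simpleE acyE nzE.
have sE'E : E :\ e \subset E by apply: subD1set.
have card_E : #|E| = #|E :\ e|.+1 by rewrite (cardsD1 e E) eE.
have e_cov : e \subset cover E by apply: bigcup_sup.
have [E'0 | nzE'] := eqVneq (E :\ e) set0.
  by rewrite card_E E'0 cards0 -(card_edge simpleE eE) subset_leq_card.
have cover_sub : cover (E :\ e) \subset cover E :\ v.
  apply/subsetP => x /bigcupP [f /setD1P [nfe fE] xf]; rewrite !inE.
  apply/andP; split; last by apply/bigcupP; exists f.
  by apply: contra_neq nfe => xv; apply: leaf_v; rewrite -?xv.
have := IH _ _ (simple_graph_subset sE'E simpleE) (acyclic_subset sE'E acyE) nzE'.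
have := subset_leq_card cover_sub.
by rewrite (cardsD1 v (cover E)) (subsetP e_cov v ve) card_E; lia.
Qed.

Lemma sum_deg_pred_lt (T : finType) (E : {set {set T}}) :
  simple_graph E -> acyclic E -> E != set0 -> mindeg_ge1 E ->
  \sum_v (deg E v).-1 < #|E|.
Proof.
move=> simpleE acyE nzE deg_ge1.
have cover_T : cover E = setT.
  apply/eqP; rewrite eqEsubset subsetT; apply/subsetP => v _.
  have /set0Pn [e] : star E v != set0 by rewrite -card_gt0 deg_ge1.
  by rewrite inE => /andP [eE ve]; apply/bigcupP; exists e.
have := card_forest_lt_cover simpleE acyE nzE; rewrite cover_T cardsT.
have : \sum_v (deg E v).-1 + #|T| = 2 * #|E|.
  rewrite -sum_deg // -sum1_card -big_split; apply: eq_bigr => v _.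
  by rewrite /= addn1 prednK ?deg_ge1.
lia.
Qed.

Lemma card_line_edges_le_pack N D (T : finType) (E : {set {set T}}) :
  admissible N D E -> 0 < N -> 1 < D -> #|line_edges E| <= pack N.-1 D.-1.
Proof.
case=> simpleE acyE card_E maxdeg_E deg_ge1 N_gt0 D_gt1.
have M_gt0 : 0 < D.-1 by rewrite -ltnS prednK // ltnW.
have nzE : E != set0 by rewrite -card_gt0 card_E.
rewrite card_line_edges //; under eq_bigr do rewrite -[deg E _]prednK ?deg_ge1 //.
apply: leq_trans (leq_sum_pack _ M_gt0 _) (leq_pack M_gt0 _) => [v|].
  by have := leq_deg_maxdeg E v; rewrite maxdeg_E; lia.
by have := sum_deg_pred_lt simpleE acyE nzE deg_ge1; rewrite card_E; lia.
Qed.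

Lemma card_line_edges_maxdeg1 (T : finType) (E : {set {set T}}) :
  simple_graph E -> maxdeg E <= 1 -> #|line_edges E| = 0.
Proof.
move=> simpleE maxdeg_le1; rewrite card_line_edges // big1 // => v _.
by rewrite bin_small // ltnS (leq_trans (leq_deg_maxdeg E v)).
Qed.

Section ParentForest.
Variables (n : nat) (R : {set 'I_n}) (p : 'I_n -> 'I_n).
Hypothesis lt_parent : forall i, i \in R -> p i < i.

Definition parent_edges : {set {set 'I_n}} := [set [set p i; i] | i in R].

Lemma parent_neq i : i \in R -> p i != i.
Proof. by move/lt_parent; rewrite neq_ltn => ->. Qed.

Lemma parent_edges_simple : simple_graph parent_edges.
Proof. by apply/forall_inP => _ /imsetP [i iR ->]; rewrite cards2 parent_neq. Qed.

Lemma parent_edge_inj : {in R &, injective (fun i => [set p i; i])}.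
Proof.
move=> i j iR jR eq_ij.
have : i \in [set p j; j] by rewrite -eq_ij set22.
have : j \in [set p i; i] by rewrite eq_ij set22.
rewrite !inE => /orP [/eqP def_j | /eqP -> //] /orP [/eqP def_i | /eqP -> //].
by have := lt_parent iR; have := lt_parent jR; rewrite -def_i -def_j; lia.
Qed.

Lemma card_parent_edges : #|parent_edges| = #|R|.
Proof. exact: card_in_imset parent_edge_inj. Qed.

Lemma adj_parent_le x y : adj parent_edges x y -> x <= y -> x = p y.
Proof.
case/andP => nxy /imsetP [i iR def_xy] le_xy.
have : x \in [set p i; i] by rewrite -def_xy set21.
have : y \in [set p i; i] by rewrite -def_xy set22.
rewrite !inE => /orP [/eqP def_y | /eqP def_y] /orP [/eqP def_x | /eqP def_x].
- by move: nxy; rewrite def_x def_y eqxx.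
- by have := lt_parent iR; rewrite -def_y -def_x; lia.
- by rewrite def_x def_y.
- by move: nxy; rewrite def_x def_y eqxx.
Qed.

(* Both neighbours of the largest vertex m of a cycle would be p m. *)
Lemma parent_edges_acyclic : acyclic parent_edges.
Proof.
case=> s [s3 uniq_s cyc_s].
have [m0 m0s] : exists m, m \in s.
  by case: s s3 {uniq_s cyc_s} => // m s _; exists m; rewrite mem_head.
case: (@arg_maxnP _ m0 (fun i => i \in s) val m0s) => m ms max_m.
case: (rot_to ms) => k s' def_s.
have : 3 <= size (m :: s') by rewrite -def_s size_rot.
have : uniq (m :: s') by rewrite -def_s rot_uniq.
have : cycle (adj parent_edges) (m :: s') by rewrite -def_s rot_cycle.
have le_m x : x \in m :: s' -> x <= m by rewrite -def_s mem_rot => /max_m.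
case: s' {def_s} le_m => [|y [|a t]] //= le_m.
rewrite rcons_path => /and4P [adj_my _ _ adj_zm] /and4P [_ nyat _ _] _.
have z_at : last a t \in a :: t by apply: mem_last.
have ym : y = p m by apply: adj_parent_le; rewrite 1?adj_sym ?le_m // !inE eqxx orbT.
have zm : last a t = p m.
  by apply: adj_parent_le; rewrite ?le_m // in_cons [_ \in y :: _]in_cons z_at !orbT.
by move: nyat; rewrite ym -zm z_at.
Qed.

Lemma deg_parent_edges v : deg parent_edges v = #|[set i in R | p i == v]| + (v \in R).
Proof.
have star_v : [set e in parent_edges | v \in e] =
    (fun i => [set p i; i]) @: [set i in R | v \in [set p i; i]].
  apply/setP => e; apply/idP/imsetP => [| [i]]; rewrite in_set.
    by case/andP => /imsetP [i iR ->] vi; exists i; rewrite // in_set iR.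
  by rewrite in_set => /andP [iR vi] ->; rewrite vi andbT; apply/imsetP; exists i.
rewrite /deg star_v card_in_imset => [|i j]; last first.
  by rewrite !in_set => /andP [iR _] /andP [jR _]; apply: parent_edge_inj.
have [vR | vNR] := boolP (v \in R).
  rewrite (_ : [set i in R | _] = v |: [set i in R | p i == v]).
    by rewrite cardsU1 inE vR (negbTE (parent_neq vR)) addnC.
  apply/setP => i; rewrite !inE; case: (eqVneq i v) => [-> | niv].
    by rewrite vR orbT.
  by rewrite orbF eq_sym.
rewrite addn0; apply: eq_card => i; rewrite !inE; case: (eqVneq i v) => [-> | niv].
  by rewrite (negbTE vNR).
by rewrite orbF eq_sym.
Qed.
End ParentForest.

Lemma card_ord_interval n a b : #|[set i : 'I_n | a <= i < b]| = minn b n - a.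
Proof.
have -> : #|[set i : 'I_n | a <= i < b]| = count (fun i => a <= i < b) (iota 0 n).
  by rewrite cardsE cardE /enum_mem size_filter -val_enum_ord count_map enumT.
elim: n => [|n IH]; first by rewrite minn0.
rewrite -addn1 iotaD count_cat IH /= add0n addn0.
by case: (boolP (a <= n < b)) => /= h; lia.
Qed.

Section GreedyTree.
Variables (N M : nat).
Hypotheses (M_gt0 : 0 < M) (ltMN : M < N).

(* Vertices 0, ..., N in breadth-first order: the root 0 is the parent of 1, ..., M.+1 and a
   vertex v > 0 the parent of v * M + 2, ..., v * M + M.+1, so that all internal vertices
   but the last one have degree M.+1. *)
Definition greedy_parent (i : 'I_N.+1) : 'I_N.+1 := inord (i.-2 %/ M).

Definition greedy_tree : {set {set 'I_N.+1}} :=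
  parent_edges [set i : 'I_N.+1 | 0 < i] greedy_parent.

Lemma greedy_parent_val i : greedy_parent i = i.-2 %/ M :> nat.
Proof. by rewrite inordK //; have := ltn_ord i; have := leq_div i.-2 M; lia. Qed.

Lemma lt_greedy_parent i : i \in [set i : 'I_N.+1 | 0 < i] -> greedy_parent i < i.
Proof. by rewrite inE greedy_parent_val; have := leq_div i.-2 M; lia. Qed.

Lemma greedy_children (i v : nat) : (0 < i) && (i.-2 %/ M == v) =
  ((if v is 0 then 1 else (v * M).+2) <= i < (v * M + M).+2).
Proof.
rewrite eqn_leq leq_divRL // -[_ %/ M <= v]ltnS ltn_divLR // mulSn.
by case: v => [|v]; case: (boolP (0 < i)) => /= i_gt0; lia.
Qed.

Lemma deg_greedy_tree v : deg greedy_tree v = (minn M (N.-1 - v * M)).+1.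
Proof.
rewrite deg_parent_edges; last exact: lt_greedy_parent.
set lo := if nat_of_ord v is 0 then 1 else (v * M).+2.
have -> : [set i in [set i : 'I_N.+1 | 0 < i] | greedy_parent i == v] =
          [set i : 'I_N.+1 | lo <= i < (v * M + M).+2].
  by apply/setP => i; rewrite !inE -greedy_children -val_eqE /= greedy_parent_val.
rewrite card_ord_interval inE /lo; case: (nat_of_ord v) => [|u] /=; lia.
Qed.

Lemma greedy_tree_admissible : admissible N M.+1 greedy_tree.
Proof.
split.
- exact: (parent_edges_simple lt_greedy_parent).
- exact: (parent_edges_acyclic lt_greedy_parent).
- rewrite card_parent_edges; last exact: lt_greedy_parent.
  have -> : [set i : 'I_N.+1 | 0 < i] = [set i : 'I_N.+1 | 1 <= i < N.+1].
    by apply/setP => i; rewrite !inE ltn_ord andbT.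
  by rewrite card_ord_interval minnn subn1.
- apply/eqP; rewrite eqn_leq; apply/andP; split.
    by apply/bigmax_leqP => v _; rewrite deg_greedy_tree ltnS geq_minl.
  by apply: leq_trans (leq_deg_maxdeg _ ord0); rewrite deg_greedy_tree mul0n subn0; lia.
- by move=> v; rewrite deg_greedy_tree.
Qed.

Lemma card_line_edges_greedy_tree : #|line_edges greedy_tree| = pack N.-1 M.
Proof.
rewrite card_line_edges; last exact: (parent_edges_simple lt_greedy_parent).
under eq_bigr do rewrite deg_greedy_tree.
by apply: greedy_sum_pack => //; apply: leq_trans (leq_pmulr _ M_gt0); lia.
Qed.
End GreedyTree.

Section Matching.
Variable N : nat.
Hypothesis N_gt0 : 0 < N.

Definition matching_parent (i : 'I_(N + N)) : 'I_(N + N) := insubd i (i - N).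

Definition matching : {set {set 'I_(N + N)}} :=
  parent_edges [set i : 'I_(N + N) | N <= i] matching_parent.

Lemma matching_parent_val i : matching_parent i = i - N :> nat.
Proof. by rewrite val_insubd; have := ltn_ord i; case: ifP; lia. Qed.

Lemma lt_matching_parent i :
  i \in [set i : 'I_(N + N) | N <= i] -> matching_parent i < i.
Proof. by rewrite inE matching_parent_val; lia. Qed.

Lemma deg_matching v : deg matching v = 1.
Proof.
rewrite deg_parent_edges; last exact: lt_matching_parent.
have -> : [set i in [set i : 'I_(N + N) | N <= i] | matching_parent i == v] =
          [set i : 'I_(N + N) | v + N <= i < (v + N).+1].
  by apply/setP => i; rewrite !inE -val_eqE /= matching_parent_val; lia.
by rewrite card_ord_interval inE; have := ltn_ord v; lia.
Qed.

Lemma matching_admissible : admissible N 1 matching.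
Proof.
have N2_gt0 : 0 < N + N by rewrite addn_gt0 N_gt0.
split.
- exact: (parent_edges_simple lt_matching_parent).
- exact: (parent_edges_acyclic lt_matching_parent).
- rewrite card_parent_edges; last exact: lt_matching_parent.
  have -> : [set i : 'I_(N + N) | N <= i] = [set i : 'I_(N + N) | N <= i < N + N].
    by apply/setP => i; rewrite !inE ltn_ord andbT.
  by rewrite card_ord_interval minnn addnK.
- apply/eqP; rewrite eqn_leq; apply/andP; split.
    by apply/bigmax_leqP => v _; rewrite deg_matching.
  by rewrite -(deg_matching (Ordinal N2_gt0)) leq_deg_maxdeg.
- by move=> v; rewrite deg_matching.
Qed.
End Matching.

Lemma is_gE N D m : is_g N D m -> g N D = m.
Proof.
move=> g_m; have [[T [E [admE <-]]] le_g] : is_g N D (g N D).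
  by apply: epsilon_spec; exists m.
case: g_m => [[T' [E' [admE' <-]]] le_m].
by apply/eqP; rewrite eqn_leq le_m // le_g.
Qed.

Lemma g_pack N D : 1 < D -> D <= N -> g N D = pack N.-1 D.-1.
Proof.
move=> D_gt1 le_DN; have M_gt0 : 0 < D.-1 by rewrite -ltnS prednK // ltnW.
have ltMN : D.-1 < N by rewrite prednK ?(ltnW D_gt1).
apply: is_gE; split; last first.
  by move=> T E admE; apply: card_line_edges_le_pack admE _ D_gt1; lia.
exists 'I_N.+1, (greedy_tree N D.-1); split; last exact: card_line_edges_greedy_tree.
by rewrite -[X in admissible _ X]prednK ?(ltnW D_gt1) //; apply: greedy_tree_admissible.
Qed.

Lemma g_maxdeg1 N : 0 < N -> g N 1 = 0.
Proof.
have no_line_edges T (E : {set {set T}}) : admissible N 1 E -> #|line_edges E| = 0.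
  by case=> simpleE _ _ maxdeg_E _; rewrite card_line_edges_maxdeg1 // maxdeg_E.
move=> N_gt0; apply: is_gE; split; last by move=> T E /no_line_edges ->.
have admM := matching_admissible N_gt0.
by exists 'I_(N + N), (matching N); rewrite no_line_edges.
Qed.

Lemma g_formula N D k : 1 < D -> D <= N -> k <= D - 2 -> N.-1 = k %[mod D.-1] ->
  ((g N D)%:R = ((N - k - 1) * D)%:R / 2 + ('C(k.+1, 2))%:R :> rat)%R /\
  (((N - k - 1) * D)%:R / 2 + ('C(k.+1, 2))%:R <= ((N - 1) * D)%:R / 2 :> rat)%R.
Proof.
move=> D_gt1 le_DN le_kD modN; have [M def_D] : exists M, D = M.+1 by exists D.-1; lia.
have M_gt0 : 0 < M by lia.
subst D; have ltkM : k < M by lia.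
have [q def_N] : exists q, N = (q * M + k).+1.
  by exists (N.-1 %/ M); rewrite -[k](modn_small ltkM) -modN -divn_eq prednK //; lia.
subst N; rewrite (_ : (q * M + k).+1 - k - 1 = q * M) ?subn1 /=; last by lia.
have g2 : 2 * g (q * M + k).+1 M.+1 = q * (M * M.+1) + 2 * 'C(k.+1, 2).
  by rewrite g_pack // !mul2n pack_eval_double // bin2S_double.
have le_g2 : q * (M * M.+1) + 2 * 'C(k.+1, 2) <= (q * M + k) * M.+1.
  by rewrite mul2n bin2S_double mulnDl mulnA leq_add2l leq_mul2l ltnS ltnW ?orbT.
rewrite -mulnA; move: g2 le_g2.
move: (g _ _) (q * (M * M.+1)) 'C(k.+1, 2) ((q * M + k) * M.+1) => a b c d eq_abc le_bcd.
have /(congr1 (fun n => n%:R : rat)) := eq_abc.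
have : ((b + 2 * c)%:R <= d%:R :> rat)%R by rewrite ler_nat.
by rewrite !natrD => ? ?; split; lra.
Qed.

Lemma ltn_g_succN N D : 1 < D -> D <= N -> g N D < g N.+1 D.
Proof.
move=> D_gt1 le_DN; rewrite !g_pack ?leqW //=.
by have := pack_succ N.-1 (_ : 0 < D.-1); rewrite prednK //; lia.
Qed.

Lemma ltn_g_succD N D : 0 < D -> D < N -> g N D < g N D.+1.
Proof.
move=> D_gt0 ltDN; have [le_D1 | D_gt1] := leqP D 1.
  have D1 : D = 1 by lia.
  subst D; rewrite g_maxdeg1 ?(ltnW ltDN) // g_pack //=.
  by apply: leq_trans (leq_pack (_ : 0 < 1) (_ : 1 <= N.-1)) => //; lia.
rewrite (g_pack D_gt1 (ltnW ltDN)) (g_pack (leqW D_gt1) ltDN) /=.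
by have := ltn_pack_capS (_ : 0 < D.-1) (_ : D.-1 < N.-1); rewrite prednK //; lia.
Qed.

Theorem mainTheorem7 (N D : nat) (HD : (1 <= D)%N) (HDN : (D <= N)%N) :
  [/\ g N 1 = 0%N,
      (forall k : nat, (2 <= D)%N -> (k <= D - 2)%N -> N.-1 = k %[mod D.-1] ->
         ((g N D)%:R = ((N - k - 1) * D)%:R / 2 + ('C(k.+1, 2))%:R :> rat)%R
         /\ (((N - k - 1) * D)%:R / 2 + ('C(k.+1, 2))%:R
               <= ((N - 1) * D)%:R / 2 :> rat)%R),
      ((2 <= D)%N -> ((g N D).+1 <= g N.+1 D)%N)
    & ((D < N)%N -> ((g N D).+1 <= g N D.+1)%N)].
Proof.
split.
- exact/g_maxdeg1/(leq_trans HD HDN).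
- by move=> k D_gt1; apply: g_formula.
- by move=> D_gt1; apply: ltn_g_succN.
- exact: ltn_g_succD.
Qed.
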